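(* Let $Y$ be a (discrete) groupoid and $\Lambda\subseteq Y$ a subcategory with $Y^0\subseteq\Lambda$. For $t\in Y$, $W_t\in\mathcal W_0$ if and only if there is a finite set $F\subseteq\mathcal Z_\Lambda$ such that (1) for every $\zeta\in F$, $\varphi_\zeta(\beta)=t\beta$ for all $\beta\in A(\zeta)$; and (2) $\{\beta\in\Lambda: r(\beta)=s(t),\ t\beta\in\Lambda\}=\bigcup_{\zeta\in F}A(\zeta)$.
   Context: $\Lambda$ is a left cancellative small category (being a subcategory of a groupoid), composition $\alpha\beta$ defined when $s(\alpha)=r(\beta)$. On $\ell^2(\Lambda)$ with standard basis $\{e_\alpha\}$, for $t\in Y$ let $W_t e_\alpha=e_{t\alpha}$ if $s(t)=r(\alpha)$ and $t\alpha\in\Lambda$, and $W_te_\alpha=0$ otherwise (so $W_t=J^*L_tJ$ with $L$ the left regular representation of $Y$ and $J:\ell^2(\Lambda)\to\ell^2(Y)$ the inclusion). $\mathcal W_0$ is the C*-algebra generated by $\{W_\alpha:\alpha\in\Lambda\}$. For $\alpha\in\Lambda$, $\tau^\alpha(\beta)=\alpha\beta$ on $\{\beta\in\Lambda:r(\beta)=s(\alpha)\}$ and $\sigma^\alpha$ is its inverse on $\alpha\Lambda$. A zigzag is $\zeta=(\alpha_1,\beta_1,\dots,\alpha_n,\beta_n)$, $\alpha_i,\beta_i\in\Lambda$, with $r(\alpha_i)=r(\beta_i)$ and $s(\alpha_{i+1})=s(\beta_i)$; $\mathcal Z_\Lambda$ the set of zigzags; $\varphi_\zeta=\sigma^{\alpha_1}\circ\tau^{\beta_1}\circ\cdots\circ\sigma^{\alpha_n}\circ\tau^{\beta_n}$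 (composition of partial maps) with domain $A(\zeta)$. *)

From Stdlib Require Import Reals List ClassicalEpsilon.
Import ListNotations.
Open Scope R_scope.

Record Groupoid := {
  gY :> Type;
  gr : gY -> gY;
  gs : gY -> gY;
  gmul : gY -> gY -> gY;       (* x y, meaningful when s x = r y *)
  ginv : gY -> gY;
  g_r_mul : forall x y, gs x = gr y -> gr (gmul x y) = gr x;
  g_s_mul : forall x y, gs x = gr y -> gs (gmul x y) = gs y;
  g_assoc : forall x y z, gs x = gr y -> gs y = gr z ->
              gmul (gmul x y) z = gmul x (gmul y z);
  g_unit_l : forall x, gmul (gr x) x = x;
  g_unit_r : forall x, gmul x (gs x) = x;
  g_r_r : forall x, gr (gr x) = gr x;
  g_s_r : forall x, gs (gr x) = gr x;
  g_r_s : forall x, gr (gs x) = gs x;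
  g_s_s : forall x, gs (gs x) = gs x;
  g_r_inv : forall x, gr (ginv x) = gs x;
  g_s_inv : forall x, gs (ginv x) = gr x;
  g_inv_r : forall x, gmul x (ginv x) = gr x;
  g_inv_l : forall x, gmul (ginv x) x = gs x
}.

Arguments gr {g} x.
Arguments gs {g} x.
Arguments gmul {g} x y.
Arguments ginv {g} x.

Definition Subcat (G : Groupoid) (L : G -> Prop) : Prop :=
  (forall x : G, L (gr x)) /\ (forall x : G, L (gs x)) /\
  (forall x y : G, L x -> L y -> gs x = gr y -> L (gmul x y)).

Record C := mkC { re : R; im : R }.
Definition C0 : C := mkC 0 0.
Definition Cadd (a b : C) : C := mkC (re a + re b) (im a + im b).
Definition Csub (a b : C) : C := mkC (re a - re b) (im a - im b).
Definition Cmul (a b : C) : C :=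
  mkC (re a * re b - im a * im b) (re a * im b + im a * re b).
Definition Cabs2 (a : C) : R := re a * re a + im a * im a.

Definition cif {A : Type} (P : Prop) (a b : A) : A :=
  if excluded_middle_informative P then a else b.

Section L2.
Variable G : Groupoid.
Variable L : G -> Prop.

(** Vectors of ℓ²(Λ): we work on the dense subspace of finitely supported
    vectors v : Y -> C with support contained in Λ. *)
Definition vec := G -> C.

Definition fin_vec (v : vec) : Prop :=
  (exists l : list G, forall y, v y <> C0 -> In y l) /\
  (forall y, v y <> C0 -> L y).

Definition sumsq (l : list G) (v : vec) : R :=
  fold_right (fun y acc => Cabs2 (v y) + acc) 0 l.

Definition norm2_le (v : vec) (c : R) : Prop :=
  exists l : list G, NoDup l /\ (forall y, v y <> C0 -> In y l) /\ sumsq l v <= c.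

(** W_t e_b = e_{t b} if s t = r b and t b ∈ Λ, else 0; i.e.
    (W_t v)(g) = v (t^-1 g) if g ∈ Λ, r g = r t and t^-1 g ∈ Λ, else 0. *)
Definition W (t : G) (v : vec) : vec := fun g =>
  cif (L g /\ gr g = gr t /\ L (gmul (ginv t) g)) (v (gmul (ginv t) g)) C0.

Definition Wadj (t : G) (v : vec) : vec := fun b =>
  cif (L b /\ gr b = gs t /\ L (gmul t b)) (v (gmul t b)) C0.

(** words in the generators W_a, W_a^* (a ∈ Λ); true = W_a, false = W_a^* *)
Definition letter_apply (x : bool * G) (v : vec) : vec :=
  if fst x then W (snd x) v else Wadj (snd x) v.

Definition word_apply (w : list (bool * G)) (v : vec) : vec :=
  fold_right letter_apply v w.

Definition valid_word (w : list (bool * G)) : Prop :=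
  w <> [] /\ forall x, In x w -> L (snd x).

(** elements of the *-algebra generated by {W_a : a ∈ Λ}:
    finite linear combinations of nonempty words *)
Definition lc_apply (P : list (C * list (bool * G))) (v : vec) : vec := fun y =>
  fold_right (fun cw acc => Cadd (Cmul (fst cw) (word_apply (snd cw) v y)) acc) C0 P.

Definition in_star_alg (P : list (C * list (bool * G))) : Prop :=
  forall cw, In cw P -> valid_word (snd cw).

(** W_t ∈ W_0 = norm closure of the *-algebra generated by {W_a : a ∈ Λ}.
    The operator norm ||W_t - P|| <= eps is expressed as
    ||(W_t - P) v|| <= eps for all finitely supported v with ||v|| <= 1. *)
Definition in_W0 (t : G) : Prop :=
  forall eps, 0 < eps ->
  exists P, in_star_alg P /\
    forall v, fin_vec v -> norm2_le v 1 ->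
      norm2_le (fun y => Csub (W t v y) (lc_apply P v y)) (eps * eps).

(** τ^b(x) = b x on {x ∈ Λ : r x = s b}, as a relation x ↦ y *)
Definition tau (b : G) (x y : G) : Prop := L x /\ gr x = gs b /\ y = gmul b x.
Definition sigma (a : G) (y x : G) : Prop := tau a x y.

(** a zigzag (a1,b1,...,an,bn) is encoded as [(a1,b1); ...; (an,bn)], n >= 1 *)
Fixpoint zz_cond (z : list (G * G)) : Prop :=
  match z with
  | [] => True
  | (a, b) :: rest =>
      L a /\ L b /\ gr a = gr b /\
      match rest with
      | [] => True
      | (a', _) :: _ => gs a' = gs b
      end /\ zz_cond rest
  end.

Definition zigzag (z : list (G * G)) : Prop := z <> [] /\ zz_cond z.

(** φ_ζ = σ^{a1} ∘ τ^{b1} ∘ ... ∘ σ^{an} ∘ τ^{bn} (partial maps, as relations) *)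
Fixpoint phi (z : list (G * G)) (x y : G) : Prop :=
  match z with
  | [] => x = y
  | (a, b) :: rest => exists u v, phi rest x u /\ tau b u v /\ sigma a v y
  end.

Definition Adom (z : list (G * G)) (x : G) : Prop := exists y, phi z x y.

End L2.

(* Every word in the generators [W_a], [W_a^*] (a ∈ Λ) maps each basis vector
   [e_x] to a basis vector or to 0, and the partial map it induces on Λ is a
   zigzag map; zigzag maps in turn are restrictions of left translations.
   If [W_t] is within 1/2 of a combination of words, then for every [b] in the
   domain of [W_t] some word must send [e_b] to [e_{t b}]; the zigzag of that
   word covers [b] and, being a translation that sends [b] to [t b], agrees
   with [t].  Conversely, the words of the zigzags in [F] and the projections
   onto their domains combine by inclusion-exclusion into an element of the
   *-algebra equal to [W_t]. *)

From Stdlib Require Import Reals List Lra ClassicalEpsilon Classical.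
Import ListNotations.
Open Scope R_scope.

Lemma C_ext (a b : C) : re a = re b -> im a = im b -> a = b.
Proof. destruct a, b; simpl; intros -> ->; reflexivity. Qed.

Definition C1 : C := mkC 1 0.
Definition Copp (c : C) : C := mkC (- re c) (- im c).

Lemma cif_true (A : Type) (P : Prop) (a b : A) : P -> cif P a b = a.
Proof. unfold cif; destruct excluded_middle_informative; tauto. Qed.

Lemma cif_false (A : Type) (P : Prop) (a b : A) : ~ P -> cif P a b = b.
Proof. unfold cif; destruct excluded_middle_informative; tauto. Qed.

Lemma cif_iff (A : Type) (P Q : Prop) (a b : A) : (P <-> Q) -> cif P a b = cif Q a b.
Proof.
  intros HPQ; unfold cif.
  do 2 destruct excluded_middle_informative; reflexivity || tauto.
Qed.

Lemma cif_incl_excl (P Q Q' : Prop) (a : C) : (P -> (Q' <-> Q)) ->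
  Cadd (Cmul C1 (cif P a C0)) (Cadd (cif Q a C0) (Copp (cif P (cif Q' a C0) C0)))
  = cif (P \/ Q) a C0.
Proof.
  intros HQ; unfold cif.
  repeat destruct excluded_middle_informative; try tauto; apply C_ext; simpl; ring.
Qed.

Section GroupoidFacts.
Variable G : Groupoid.

Lemma gmulKg (b u : G) : gs b = gr u -> gmul (ginv b) (gmul b u) = u.
Proof.
  intros Hbu. rewrite <- g_assoc by (rewrite ?g_s_inv; auto).
  rewrite g_inv_l, Hbu. apply g_unit_l.
Qed.

Lemma gmulKVg (b v : G) : gr v = gr b -> gmul b (gmul (ginv b) v) = v.
Proof.
  intros Hvb. rewrite <- g_assoc by (rewrite ?g_r_inv, ?g_s_inv; auto).
  rewrite g_inv_r, <- Hvb. apply g_unit_l.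
Qed.

Lemma gmulgK (g b : G) : gs g = gr b -> gmul (gmul g b) (ginv b) = g.
Proof.
  intros Hgb. rewrite g_assoc by (rewrite ?g_r_inv; auto).
  rewrite g_inv_r, <- Hgb. apply g_unit_r.
Qed.

Lemma gr_inv_mul (b v : G) : gr v = gr b -> gr (gmul (ginv b) v) = gs b.
Proof. intros Hvb. rewrite g_r_mul by (rewrite g_s_inv; auto). apply g_r_inv. Qed.

End GroupoidFacts.

Section Zigzags.
Variable G : Groupoid.
Variable L : G -> Prop.
Hypothesis HL : Subcat G L.

(* The [x] with [W_b e_x = e_y] (resp. [W_a^* e_x = e_y]), if there is one. *)
Definition pull_letter (l : bool * G) (y : G) : option G :=
  match l with
  | (true, b) => cif (L y /\ gr y = gr b /\ L (gmul (ginv b) y)) (Some (gmul (ginv b) y)) None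
  | (false, a) => cif (L y /\ gr y = gs a /\ L (gmul a y)) (Some (gmul a y)) None
  end.

Fixpoint pull_word (w : list (bool * G)) (y : G) : option G :=
  match w with
  | [] => Some y
  | l :: w' => match pull_letter l y with Some x => pull_word w' x | None => None end
  end.

Lemma letter_apply_pull l f y :
  letter_apply G L l f y = match pull_letter l y with Some x => f x | None => C0 end.
Proof.
  destruct l as [[|] a]; unfold letter_apply, W, Wadj, pull_letter, cif; simpl;
    destruct excluded_middle_informative; reflexivity.
Qed.

Lemma word_apply_pull w f y :
  word_apply G L w f y = match pull_word w y with Some x => f x | None => C0 end.
Proof.
  revert y; induction w as [|l w IH]; intros y; [reflexivity|].
  unfold word_apply; simpl; fold (word_apply G L w f).
  rewrite letter_apply_pull. destruct (pull_letter l y); auto.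
Qed.

Lemma word_apply_app w1 w2 f :
  word_apply G L (w1 ++ w2) f = word_apply G L w1 (word_apply G L w2 f).
Proof. apply fold_right_app. Qed.

Lemma pull_word_app w1 w2 y x :
  pull_word (w1 ++ w2) y = Some x <-> exists u, pull_word w1 y = Some u /\ pull_word w2 u = Some x.
Proof.
  revert y; induction w1 as [|l w1 IH]; intros y; simpl.
  - split; [eauto | intros [u [[= <-] H]]; exact H].
  - destruct (pull_letter l y) as [z|]; [apply IH|].
    split; [discriminate | intros [u [[=] _]]].
Qed.

Lemma pull_word_single l y x : pull_word [l] y = Some x <-> pull_letter l y = Some x.
Proof. simpl; destruct (pull_letter l y); reflexivity. Qed.

Lemma pull_letter_W b v u :
  pull_letter (true, b) v = Some u <-> tau G L b u v /\ L v.
Proof.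
  unfold pull_letter, tau, cif; destruct excluded_middle_informative as [H|H]; split.
  - intros [= <-]. destruct H as [Lv [Hvb Lu]].
    rewrite gr_inv_mul, gmulKVg by auto. auto.
  - intros [[Lu [Hub ->]] Lv]. rewrite gmulKg by auto. reflexivity.
  - discriminate.
  - intros [[Lu [Hub ->]] Lv]. exfalso; apply H.
    rewrite g_r_mul, gmulKg by auto. auto.
Qed.

Lemma pull_letter_Wadj a y v :
  pull_letter (false, a) y = Some v <-> sigma G L a v y /\ L v.
Proof.
  unfold pull_letter, sigma, tau, cif; destruct excluded_middle_informative as [H|H]; split.
  - intros [= <-]. tauto.
  - intros [[Ly [Hya ->]] Lv]. reflexivity.
  - discriminate.
  - intros [[Ly [Hya ->]] Lv]. tauto.
Qed.

Definition flip_letter (l : bool * G) : bool * G := (negb (fst l), snd l).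

Definition adjoint_word (w : list (bool * G)) : list (bool * G) := rev (map flip_letter w).

Lemma pull_flip_letter l y x : pull_letter (flip_letter l) y = Some x <-> pull_letter l x = Some y.
Proof.
  destruct l as [[|] a]; unfold flip_letter; cbn [fst snd negb];
    rewrite pull_letter_W, pull_letter_Wadj; reflexivity.
Qed.

Lemma pull_adjoint_word w x y : pull_word (adjoint_word w) x = Some y <-> pull_word w y = Some x.
Proof.
  revert x y; induction w as [|l w IH]; intros x y; simpl.
  - split; intros [= ->]; reflexivity.
  - unfold adjoint_word; simpl; fold (adjoint_word w).
    rewrite pull_word_app. setoid_rewrite pull_word_single. setoid_rewrite IH.
    setoid_rewrite pull_flip_letter.
    split.
    + intros [u [Hu Hl]]. rewrite Hl. exact Hu.
    + destruct (pull_letter l y) as [u|]; [eauto | discriminate].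
Qed.

Lemma tau_sigma_step {a b u v y : G} : tau G L b u v -> sigma G L a v y ->
  gr a = gr b /\ gr u = gs b /\ y = gmul (ginv a) (gmul b u) /\ L u /\ L y.
Proof.
  unfold sigma, tau. intros [Lu [Hub Hv]] [Ly [Hya Hv']].
  assert (gr v = gr b) by (rewrite Hv, g_r_mul; auto).
  assert (gr v = gr a) by (rewrite Hv', g_r_mul; auto).
  repeat split; auto; [congruence|]. rewrite <- Hv, Hv', gmulKg; auto.
Qed.

Lemma phi_left_mul z : z <> [] ->
  exists g : G, forall x y, phi G L z x y -> gr x = gs g /\ y = gmul g x.
Proof.
  induction z as [|[a b] z IH]; intros Hz; [congruence|].
  destruct z as [|p z].
  - exists (gmul (ginv a) b). intros x y [u [v [<- [Ht Hs]]]].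
    destruct (tau_sigma_step Ht Hs) as [Hab [Hxb [-> _]]].
    rewrite g_s_mul, g_assoc by (rewrite ?g_s_inv; auto). auto.
  - destruct IH as [h Hh]; [discriminate|].
    exists (gmul (ginv a) (gmul b h)). intros x y [u [v [Hp [Ht Hs]]]].
    destruct (Hh _ _ Hp) as [Hxh ->].
    destruct (tau_sigma_step Ht Hs) as [Hab [Hub [-> _]]].
    assert (Hbh : gs b = gr h) by (rewrite <- Hub, g_r_mul; auto).
    rewrite !g_s_mul by (rewrite ?g_s_inv, ?g_r_mul; auto).
    rewrite !g_assoc by (rewrite ?g_s_inv, ?g_r_mul, ?g_s_mul; auto). auto.
Qed.

Lemma phi_in_L z x y : z <> [] -> phi G L z x y -> L x /\ L y.
Proof.
  revert y; induction z as [|[a b] z IH]; intros y Hz Hp; [congruence|].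
  destruct Hp as [u [v [Hp [Ht Hs]]]].
  destruct (tau_sigma_step Ht Hs) as [_ [_ [_ [Lu Ly]]]].
  destruct z as [|p z].
  - simpl in Hp; subst; auto.
  - split; [apply (IH u) | ]; auto; discriminate.
Qed.

Lemma phi_zz_cond z x y : (forall p, In p z -> L (fst p) /\ L (snd p)) ->
  phi G L z x y -> zz_cond G L z.
Proof.
  revert y; induction z as [|[a b] z IH]; intros y Hz Hp; simpl; auto.
  destruct Hp as [u [v [Hp [Ht Hs]]]].
  destruct (tau_sigma_step Ht Hs) as [Hab [Hub _]].
  destruct (Hz (a, b)) as [La Lb]; simpl; auto.
  repeat split; auto.
  - destruct z as [|[a' b'] z]; auto.
    destruct Hp as [u' [v' [_ [_ [_ [Hua' _]]]]]]. congruence.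
  - apply (IH u); auto. intros p Hp'; apply Hz; simpl; auto.
Qed.

(* [σ^{r b}] and [τ^{r a}] are identities on their domains. *)
Definition letter_pair (l : bool * G) : G * G :=
  match l with (true, b) => (gr b, b) | (false, a) => (a, gr a) end.

Lemma pull_letter_step {l y u} : pull_letter l y = Some u ->
  exists v, tau G L (snd (letter_pair l)) u v /\ sigma G L (fst (letter_pair l)) v y.
Proof.
  destruct l as [[|] a]; simpl.
  - intros [[Lu [Hua ->]] Ly]%pull_letter_W. exists (gmul a u).
    unfold sigma, tau. rewrite g_s_r, <- (g_r_mul _ a u), g_unit_l by auto. auto.
  - intros [[Ly [Hya ->]] Lv]%pull_letter_Wadj. exists (gmul a y).
    unfold sigma, tau. rewrite g_s_r, <- (g_r_mul _ a y), g_unit_l by auto. auto.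
Qed.

Lemma pull_word_phi w y x : pull_word w y = Some x -> phi G L (map letter_pair w) x y.
Proof.
  revert y; induction w as [|l w IH]; intros y; simpl.
  - intros [= ->]; reflexivity.
  - destruct (pull_letter l y) as [u|] eqn:Hu; [intros Hw | discriminate].
    destruct (pull_letter_step Hu) as [v Hv]. revert Hv.
    destruct (letter_pair l) as [a b]; intros [Ht Hs]. exists u, v; auto.
Qed.

Definition zigzag_word (z : list (G * G)) : list (bool * G) :=
  flat_map (fun p => [(false, fst p); (true, snd p)]) z.

Lemma pull_zigzag_word z y x : zz_cond G L z ->
  pull_word (zigzag_word z) y = Some x <-> phi G L z x y.
Proof.
  destruct HL as [_ [_ HLmul]].
  revert y; induction z as [|[a b] z IH]; intros y Hz.
  - simpl. split; [intros [= ->] | intros ->]; reflexivity.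
  - destruct Hz as [La [Lb [_ [_ Hz]]]].
    change (zigzag_word ((a, b) :: z)) with ([(false, a)] ++ [(true, b)] ++ zigzag_word z).
    rewrite pull_word_app. setoid_rewrite pull_word_app.
    setoid_rewrite pull_word_single. setoid_rewrite IH; auto.
    setoid_rewrite pull_letter_W. setoid_rewrite pull_letter_Wadj.
    split.
    + intros [v [[Hs Lv] [u [[Ht _] Hp]]]]. exists u, v; auto.
    + intros [u [v [Hp [Ht Hs]]]]. assert (L v).
      { destruct Ht as [Lu [Hub ->]]. auto. }
      eauto 7.
Qed.

Lemma zz_cond_letters z : zz_cond G L z -> forall p, In p z -> L (fst p) /\ L (snd p).
Proof.
  induction z as [|[a b] z IH]; simpl; [tauto|].
  intros [La [Lb [_ [_ Hz]]]] p [<-|Hp]; auto.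
Qed.

Lemma zigzag_word_valid z : zigzag G L z -> valid_word G L (zigzag_word z).
Proof.
  intros [Hne Hz]. split.
  - destruct z as [|[a b] z]; [congruence | discriminate].
  - intros l [p [Hp Hl]]%in_flat_map.
    destruct (zz_cond_letters z Hz p Hp). simpl in Hl. intuition (subst; auto).
Qed.

Definition projection_word (z : list (G * G)) : list (bool * G) :=
  adjoint_word (zigzag_word z) ++ zigzag_word z.

Lemma projection_word_valid z : zigzag G L z -> valid_word G L (projection_word z).
Proof.
  intros [Hne Hl]%zigzag_word_valid. split.
  - intros [_ E]%app_eq_nil. auto.
  - intros l [Hadj|Hw]%in_app_iff; auto.
    apply in_rev, in_map_iff in Hadj as [l' [<- Hl']]. apply (Hl l' Hl').
Qed.

Lemma word_apply_graph (w : list (bool * G)) (P : Prop) (x0 y : G) f :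
  (forall x, pull_word w y = Some x <-> P /\ x = x0) ->
  word_apply G L w f y = cif P (f x0) C0.
Proof.
  intros Hw. rewrite word_apply_pull. destruct (pull_word w y) as [x|] eqn:E.
  - destruct (proj1 (Hw x) eq_refl) as [HP ->]. rewrite cif_true; auto.
  - rewrite cif_false; auto. intros HP. discriminate (proj2 (Hw x0) (conj HP eq_refl)).
Qed.

Lemma projection_word_apply z f x : zz_cond G L z ->
  word_apply G L (projection_word z) f x = cif (Adom G L z x) (f x) C0.
Proof.
  intros Hz. apply word_apply_graph. intros x'.
  unfold projection_word. rewrite pull_word_app. split.
  - intros [y [Hadj Hy]]. rewrite pull_adjoint_word in Hadj.
    split; [exists y; apply pull_zigzag_word; auto | congruence].
  - intros [[y Hp] ->]. exists y.
    rewrite pull_adjoint_word. split; apply pull_zigzag_word; auto.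
Qed.

Definition lc_opp (P : list (C * list (bool * G))) : list (C * list (bool * G)) :=
  map (fun cw => (Copp (fst cw), snd cw)) P.

Definition lc_prefix (w : list (bool * G)) (P : list (C * list (bool * G))) :
  list (C * list (bool * G)) :=
  map (fun cw => (fst cw, w ++ snd cw)) P.

Lemma lc_apply_cons cw P f y :
  lc_apply G L (cw :: P) f y =
  Cadd (Cmul (fst cw) (word_apply G L (snd cw) f y)) (lc_apply G L P f y).
Proof. reflexivity. Qed.

Lemma lc_apply_app P P' f y :
  lc_apply G L (P ++ P') f y = Cadd (lc_apply G L P f y) (lc_apply G L P' f y).
Proof.
  induction P as [|cw P IH]; [apply C_ext; simpl; ring|].
  simpl app. rewrite !lc_apply_cons, IH. apply C_ext; simpl; ring.
Qed.

Lemma lc_apply_opp P f y : lc_apply G L (lc_opp P) f y = Copp (lc_apply G L P f y).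
Proof.
  induction P as [|cw P IH]; [apply C_ext; simpl; ring|].
  simpl lc_opp. rewrite !lc_apply_cons, IH. apply C_ext; simpl; ring.
Qed.

Lemma lc_apply_prefix w P f y :
  lc_apply G L (lc_prefix w P) f y = word_apply G L w (lc_apply G L P f) y.
Proof.
  rewrite (word_apply_pull w). destruct (pull_word w y) as [x|] eqn:Hw;
    induction P as [|cw P IH]; try reflexivity;
    simpl lc_prefix; rewrite !lc_apply_cons, IH; cbn [fst snd];
    rewrite word_apply_app, (word_apply_pull w), Hw; [reflexivity | apply C_ext; simpl; ring].
Qed.

Lemma in_star_alg_app P P' :
  in_star_alg G L P -> in_star_alg G L P' -> in_star_alg G L (P ++ P').
Proof. intros HP HP' cw [Hcw|Hcw]%in_app_iff; auto. Qed.

Lemma in_star_alg_opp P : in_star_alg G L P -> in_star_alg G L (lc_opp P).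
Proof. intros HP cw [cw' [<- Hcw]]%in_map_iff. apply (HP cw' Hcw). Qed.

Lemma in_star_alg_prefix w P :
  valid_word G L w -> in_star_alg G L P -> in_star_alg G L (lc_prefix w P).
Proof.
  intros [Hne Hw] HP cw [cw' [<- Hcw]]%in_map_iff. destruct (HP cw' Hcw) as [_ Hw'].
  split.
  - intros [E _]%app_eq_nil. auto.
  - intros l [Hl|Hl]%in_app_iff; auto.
Qed.

Definition covered (F : list (list (G * G))) (x : G) : Prop :=
  exists z, In z F /\ Adom G L z x.

Lemma covered_cons z F x : covered (z :: F) x <-> Adom G L z x \/ covered F x.
Proof.
  unfold covered; simpl. split.
  - intros [z' [[<-|Hz'] Hx]]; eauto.
  - intros [Hx|[z' [Hz' Hx]]]; eauto.
Qed.

(* Inclusion-exclusion: with [E_z] the projection onto [A(z)] and [V_z] the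
   partial isometry of [z], [E_{z::F} = E_z + E_F - E_z E_F] and
   [V_{z::F} = V_z + V_F - V_z E_F]. *)
Fixpoint cover_proj (F : list (list (G * G))) : list (C * list (bool * G)) :=
  match F with
  | [] => []
  | z :: F' => (C1, projection_word z) :: cover_proj F' ++
                 lc_opp (lc_prefix (projection_word z) (cover_proj F'))
  end.

Fixpoint cover_transl (F : list (list (G * G))) : list (C * list (bool * G)) :=
  match F with
  | [] => []
  | z :: F' => (C1, zigzag_word z) :: cover_transl F' ++
                 lc_opp (lc_prefix (zigzag_word z) (cover_proj F'))
  end.

Lemma cover_proj_valid F : (forall z, In z F -> zigzag G L z) -> in_star_alg G L (cover_proj F).
Proof.
  induction F as [|z F IH]; intros HF; simpl; [intros cw []|].
  assert (Hz : valid_word G L (projection_word z)) by (apply projection_word_valid, HF; left; auto).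
  assert (IH' : in_star_alg G L (cover_proj F)) by (apply IH; intros; apply HF; right; auto).
  intros cw [<-|Hcw]; auto.
  revert cw Hcw. apply in_star_alg_app, in_star_alg_opp, in_star_alg_prefix; auto.
Qed.

Lemma cover_transl_valid F : (forall z, In z F -> zigzag G L z) -> in_star_alg G L (cover_transl F).
Proof.
  induction F as [|z F IH]; intros HF; simpl; [intros cw []|].
  assert (Hz : valid_word G L (zigzag_word z)) by (apply zigzag_word_valid, HF; left; auto).
  assert (HF' : forall z, In z F -> zigzag G L z) by (intros; apply HF; right; auto).
  intros cw [<-|Hcw]; auto.
  revert cw Hcw. apply in_star_alg_app, in_star_alg_opp, in_star_alg_prefix; auto.
  apply cover_proj_valid; auto.
Qed.

Lemma cover_proj_apply F f x : (forall z, In z F -> zz_cond G L z) ->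
  lc_apply G L (cover_proj F) f x = cif (covered F x) (f x) C0.
Proof.
  induction F as [|z F IH]; intros HF.
  - rewrite cif_false; [reflexivity | intros [z [[] _]]].
  - cbn [cover_proj]. rewrite lc_apply_cons, lc_apply_app, lc_apply_opp, lc_apply_prefix.
    cbn [fst snd].
    rewrite !projection_word_apply, IH by (intros; apply HF; simpl; auto).
    rewrite cif_incl_excl by tauto. apply cif_iff. rewrite covered_cons. tauto.
Qed.

Lemma Cabs2_nonneg c : 0 <= Cabs2 c.
Proof. unfold Cabs2. nra. Qed.

Lemma sumsq_nonneg l (v : vec G) : 0 <= sumsq G l v.
Proof. induction l as [|y l IH]; simpl; [lra|]. pose proof (Cabs2_nonneg (v y)). lra. Qed.

Lemma sumsq_In_ge l (v : vec G) y : In y l -> Cabs2 (v y) <= sumsq G l v.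
Proof.
  induction l as [|y' l IH]; simpl; [tauto|]. intros [->|Hy].
  - pose proof (sumsq_nonneg l v). lra.
  - pose proof (Cabs2_nonneg (v y')). specialize (IH Hy). lra.
Qed.

Lemma norm2_le_entry (v : vec G) c y : norm2_le G v c -> Cabs2 (v y) <= c.
Proof.
  intros [l [_ [Hsupp Hsum]]]. destruct (classic (v y = C0)) as [E|E].
  - rewrite E. pose proof (sumsq_nonneg l v). unfold Cabs2; simpl. lra.
  - pose proof (sumsq_In_ge l v y (Hsupp y E)). lra.
Qed.

Definition unit_vec (b : G) : vec G := fun x => cif (x = b) C1 C0.

Lemma unit_vec_support b y : unit_vec b y <> C0 -> y = b.
Proof. intros Hy. apply NNPP. intros Hyb. apply Hy, cif_false, Hyb. Qed.

Lemma unit_vec_fin b : L b -> fin_vec G L (unit_vec b).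
Proof.
  intros Lb. split; [exists [b] |]; intros y Hy;
    rewrite (unit_vec_support b y Hy); simpl; auto.
Qed.

Lemma unit_vec_norm b : norm2_le G (unit_vec b) 1.
Proof.
  exists [b]. split; [repeat constructor; intros []|]. split.
  - intros y Hy. rewrite (unit_vec_support b y Hy). simpl; auto.
  - simpl. unfold unit_vec. rewrite cif_true by reflexivity. unfold Cabs2; simpl. lra.
Qed.

Lemma lc_apply_vanish P f y :
  (forall cw x, In cw P -> pull_word (snd cw) y = Some x -> f x = C0) ->
  lc_apply G L P f y = C0.
Proof.
  induction P as [|cw P IH]; intros HP; [reflexivity|].
  rewrite lc_apply_cons, IH, word_apply_pull by (intros; eapply HP; simpl; eauto).
  destruct (pull_word (snd cw) y) as [x|] eqn:Hx; [rewrite (HP cw x) by (simpl; auto)|];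
    apply C_ext; simpl; ring.
Qed.

Variable t : G.

Definition agrees_with (z : list (G * G)) : Prop :=
  forall x y, phi G L z x y -> gr x = gs t /\ y = gmul t x.

Lemma zigzag_word_apply z f y : zz_cond G L z -> agrees_with z ->
  word_apply G L (zigzag_word z) f y =
  cif (gr y = gr t /\ Adom G L z (gmul (ginv t) y)) (f (gmul (ginv t) y)) C0.
Proof.
  intros Hz Ht. apply word_apply_graph. intros x. rewrite pull_zigzag_word by auto. split.
  - intros Hp. destruct (Ht _ _ Hp) as [Hx ->].
    rewrite g_r_mul, gmulKg by auto. split; [split; [reflexivity | exists (gmul t x)] | ]; auto.
  - intros [[Hy [y' Hp]] ->]. destruct (Ht _ _ Hp) as [_ Hy'].
    rewrite gmulKVg in Hy' by auto. subst y'. exact Hp.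
Qed.

Lemma cover_transl_apply F f y : (forall z, In z F -> zz_cond G L z /\ agrees_with z) ->
  lc_apply G L (cover_transl F) f y =
  cif (gr y = gr t /\ covered F (gmul (ginv t) y)) (f (gmul (ginv t) y)) C0.
Proof.
  induction F as [|z F IH]; intros HF.
  - rewrite cif_false; [reflexivity | intros [_ [z [[] _]]]].
  - destruct (HF z (or_introl eq_refl)) as [Hz Ht].
    cbn [cover_transl]. rewrite lc_apply_cons, lc_apply_app, lc_apply_opp, lc_apply_prefix.
    cbn [fst snd].
    rewrite !zigzag_word_apply, IH, cover_proj_apply by (intros; apply HF; simpl; auto).
    rewrite cif_incl_excl by tauto. apply cif_iff. rewrite covered_cons. tauto.
Qed.

Lemma W_eq_cover_transl F f y :
  (forall z, In z F -> zz_cond G L z /\ agrees_with z) ->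
  (forall b, (L b /\ gr b = gs t /\ L (gmul t b)) <-> covered F b) ->
  W G L t f y = lc_apply G L (cover_transl F) f y.
Proof.
  intros HF Hcover. rewrite cover_transl_apply by auto. apply cif_iff.
  rewrite <- Hcover. split.
  - intros [Ly [Hy Lb]]. rewrite gr_inv_mul, gmulKVg by auto. auto.
  - intros [Hy [Lb [_ Ltb]]]. rewrite gmulKVg in Ltb by auto. auto.
Qed.

Lemma in_W0_of_zigzag_cover F :
  (forall z, In z F -> zigzag G L z) ->
  (forall z, In z F -> agrees_with z) ->
  (forall b, (L b /\ gr b = gs t /\ L (gmul t b)) <-> covered F b) ->
  in_W0 G L t.
Proof.
  intros Hzz Hagree Hcover eps Heps.
  assert (HF : forall z, In z F -> zz_cond G L z /\ agrees_with z)
    by (intros z Hz; split; [apply Hzz | apply Hagree]; auto).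
  exists (cover_transl F). split; [apply cover_transl_valid; auto|].
  intros v _ _. exists []. split; [constructor|]. split.
  - intros y Hy. exfalso. apply Hy.
    rewrite (W_eq_cover_transl F v y HF Hcover). apply C_ext; simpl; ring.
  - simpl. nra.
Qed.

(* Applied to [e_b], an approximant of [W_t] within [1/2] must put weight on
   [e_{t b}], which only a word pulling [t b] back to [b] can do. *)
Lemma in_W0_pull_back : in_W0 G L t ->
  exists P, in_star_alg G L P /\
    forall b, L b -> gr b = gs t -> L (gmul t b) ->
      exists cw, In cw P /\ pull_word (snd cw) (gmul t b) = Some b.
Proof.
  intros HW. destruct (HW (1/2)) as [P [HP Happrox]]; [lra|].
  exists P. split; auto. intros b Lb Hb Ltb. apply NNPP; intros Hn.
  set (d := fun y => Csub (W G L t (unit_vec b) y) (lc_apply G L P (unit_vec b) y)).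
  assert (Hd : d (gmul t b) = Csub C1 C0).
  { unfold d, W. rewrite gmulKg by auto. rewrite cif_true, lc_apply_vanish.
    - unfold unit_vec. rewrite cif_true; reflexivity.
    - intros cw x Hcw Hx. apply cif_false. intros ->. eauto.
    - rewrite g_r_mul by auto. auto. }
  pose proof (Happrox _ (unit_vec_fin b Lb) (unit_vec_norm b)) as Hnorm.
  pose proof (norm2_le_entry d _ (gmul t b) Hnorm) as Hle.
  rewrite Hd in Hle. unfold Cabs2 in Hle; simpl in Hle. lra.
Qed.

Lemma zigzag_of_pull w y x : valid_word G L w -> pull_word w y = Some x ->
  zigzag G L (map letter_pair w) /\ phi G L (map letter_pair w) x y.
Proof.
  destruct HL as [HLr _].
  intros [Hne Hw] Hpull. pose proof (pull_word_phi w y x Hpull) as Hp.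
  split; [split|]; auto.
  - destruct w; [congruence | discriminate].
  - apply (phi_zz_cond _ x y); auto.
    intros p [l [<- Hl]]%in_map_iff. specialize (Hw l Hl).
    destruct l as [[|] a]; simpl in *; auto.
Qed.

Lemma agrees_with_of_phi z b : z <> [] -> gr b = gs t -> phi G L z b (gmul t b) -> agrees_with z.
Proof.
  intros Hz Hbt Hb. destruct (phi_left_mul z Hz) as [g Hg].
  destruct (Hg _ _ Hb) as [Hbg Htb].
  assert (t = g) as <-; [|exact Hg].
  rewrite <- (gmulgK _ t b), Htb by auto. apply gmulgK; auto.
Qed.

Lemma zigzag_cover_of_in_W0 : in_W0 G L t ->
  exists F,
    (forall z, In z F -> zigzag G L z) /\
    (forall z, In z F -> agrees_with z) /\
    (forall b, (L b /\ gr b = gs t /\ L (gmul t b)) <-> covered F b).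
Proof.
  intros HW. destruct (in_W0_pull_back HW) as [P [HP Hpull]].
  set (F := filter (fun z => if excluded_middle_informative (zigzag G L z /\ agrees_with z)
                             then true else false)
                   (map (fun cw => map letter_pair (snd cw)) P)).
  assert (HF : forall z, In z F <->
            In z (map (fun cw => map letter_pair (snd cw)) P) /\ zigzag G L z /\ agrees_with z).
  { intros z. unfold F. rewrite filter_In.
    destruct excluded_middle_informative; intuition discriminate. }
  exists F. split; [|split].
  - intros z Hz. apply HF in Hz. tauto.
  - intros z Hz. apply HF in Hz. tauto.
  - intros b. split.
    + intros [Lb [Hbt Ltb]]. destruct (Hpull b Lb Hbt Ltb) as [cw [Hcw Hb]].
      destruct (zigzag_of_pull (snd cw) _ _ (HP cw Hcw) Hb) as [Hzz Hp].
      exists (map letter_pair (snd cw)). split; [|exists (gmul t b); exact Hp].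
      apply HF. split; [apply in_map_iff; eauto|]. split; [exact Hzz|].
      apply (agrees_with_of_phi _ b); auto. apply Hzz.
    + intros [z [Hz [y Hp]]]. apply HF in Hz as [_ [[Hne _] Hagree]].
      destruct (Hagree _ _ Hp) as [Hbt ->]. destruct (phi_in_L z b _ Hne Hp). auto.
Qed.

End Zigzags.

Theorem mainTheorem18 (G : Groupoid) (L : G -> Prop) (HL : Subcat G L) (t : G) :
  in_W0 G L t <->
  exists F : list (list (G * G)),
    (forall z, In z F -> zigzag G L z) /\
    (forall z, In z F -> forall b y, phi G L z b y -> gr b = gs t /\ y = gmul t b) /\
    (forall b, (L b /\ gr b = gs t /\ L (gmul t b)) <->
               exists z, In z F /\ Adom G L z b).
Proof.
  split.
  - apply zigzag_cover_of_in_W0; assumption.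
  - intros [F [Hzz [Hagree Hcover]]].
    exact (in_W0_of_zigzag_cover G L HL t F Hzz Hagree Hcover).
Qed.
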